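(* Let $n_1<n_2<n_3$ be positive integers with $\gcd(n_1,n_2,n_3)=1$ minimally generating a nonsymmetric numerical semigroup $S=\langle n_1,n_2,n_3\rangle$ with $|\Delta(S)|>1$ and $\min\Delta(S)=1$. If $\min\{\delta_1,\delta_3\}=1$, then $\Delta(S)=\{1,2,\ldots,\max\{\delta_1,\delta_3\}\}$.
   Context: $S=\{x_1n_1+x_2n_2+x_3n_3:x_i\in\mathbb N\}$; minimally generated means no $n_i$ lies in the submonoid generated by the other two; with $F=\max(\mathbb Z\setminus S)$, $S$ is symmetric if $x\in\mathbb Z\setminus S$ implies $F-x\in S$. For $\{i,j,k\}=\{1,2,3\}$, $c_i=\min\{c\in\mathbb Z^+: cn_i\in\langle n_j,n_k\rangle\}$, and (as $S$ is nonsymmetric) $r_{ij},r_{ik}$ are the unique positive integers with $c_in_i=r_{ij}n_j+r_{ik}n_k$. $\delta_1=c_1-r_{12}-r_{13}$, $\delta_3=r_{31}+r_{32}-c_3$. For $s\in S$, $\mathcal L(s)=\{x_1+x_2+x_3:(x_1,x_2,x_3)\in\mathbb N^3,\ \sum x_in_i=s\}=\{m_1<\dots<m_k\}$, $\Delta(s)=\{m_t-m_{t-1}:2\le t\le k\}$, and $\Delta(S)=\bigcup_{s\in S}\Delta(s)$. *)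

From mathcomp Require Import all_boot all_order all_algebra.
From mathcomp Require Import ssrint ssrnum.
Set Implicit Arguments. Unset Strict Implicit. Unset Printing Implicit Defensive.
Import Order.TTheory GRing.Theory Num.Theory.

Definition inS3 (n1 n2 n3 s : nat) : Prop :=
  exists x1 x2 x3 : nat, (x1 * n1 + x2 * n2 + x3 * n3)%N = s.

Definition inS2 (a b m : nat) : Prop :=
  exists x y : nat, (x * a + y * b)%N = m.

Definition inS3Z (n1 n2 n3 : nat) (z : int) : Prop :=
  exists s : nat, z = Posz s /\ inS3 n1 n2 n3 s.

Definition minimally_generated (n1 n2 n3 : nat) : Prop :=
  ~ inS2 n2 n3 n1 /\ ~ inS2 n1 n3 n2 /\ ~ inS2 n1 n2 n3.

Definition is_frobenius (n1 n2 n3 : nat) (F : int) : Prop :=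
  ~ inS3Z n1 n2 n3 F /\ (forall x : int, F < x -> inS3Z n1 n2 n3 x)%R.

Definition symmetric_sg (n1 n2 n3 : nat) : Prop :=
  forall F : int, is_frobenius n1 n2 n3 F ->
  forall x : int, ~ inS3Z n1 n2 n3 x -> inS3Z n1 n2 n3 (F - x)%R.

(* c is c_i for n_i = a, {n_j,n_k} = {b,d}:
   the least positive c with c*a in <b,d>. *)
Definition is_c (a b d c : nat) : Prop :=
  (0 < c)%N /\ inS2 b d (c * a) /\
  (forall c' : nat, (0 < c')%N -> inS2 b d (c' * a) -> (c <= c')%N).

Definition is_length (n1 n2 n3 s m : nat) : Prop :=
  exists x1 x2 x3 : nat,
    (x1 * n1 + x2 * n2 + x3 * n3)%N = s /\ (x1 + x2 + x3)%N = m.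

Definition in_Delta_s (n1 n2 n3 s d : nat) : Prop :=
  exists m m' : nat,
    is_length n1 n2 n3 s m /\ is_length n1 n2 n3 s m' /\ (m < m')%N /\
    (forall m'' : nat, is_length n1 n2 n3 s m'' -> ~ ((m < m'')%N /\ (m'' < m')%N)) /\
    d = (m' - m)%N.

Definition in_Delta_S (n1 n2 n3 d : nat) : Prop :=
  exists s : nat, inS3 n1 n2 n3 s /\ in_Delta_s n1 n2 n3 s d.

(* Every integer relation between factorizations is a combination a v1 + b v3 of
   v1 = (c1, -r12, -r13) and v3 = (-r31, -r32, c3), and it changes the length by
   a delta1 - b delta3.  Two factorizations of the same element are joined by a chain
   of moves by +-v1, +-v3, +-(v1 + v3): remove a generator used by both and induct, and
   when their supports are disjoint one of them uses a single generator, from which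
   one such move creates a common generator.  A move changes the length by at most
   max(delta1, delta3), which bounds Delta(S).  Conversely, if delta1 = 1 (resp.
   delta3 = 1) and d <= delta3 (resp. d <= delta1), two factorizations at distance d
   are given explicitly, and a case analysis on the integers (a, b) for which
   p + a v1 + b v3 stays nonnegative shows that no length lies strictly between. *)

From mathcomp Require Import all_boot all_order all_algebra.
From mathcomp Require Import ssrint ssrnum zify ring.
From Stdlib Require Import Relations.
Import Order.TTheory GRing.Theory Num.Theory.
Set Implicit Arguments. Unset Strict Implicit.

(* In these lemmas (a, b) stands for the factorization p + a v1 + b v3 of an element
   with a fixed factorization p; the hypotheses on a and b say that it is nonnegative. *)
Section LatticeGaps.
Local Open Scope ring_scope.
Variables c1 r12 r13 c3 r31 r32 : int.
Hypotheses (r12_gt0 : 0 < r12) (r13_gt0 : 0 < r13) (r31_gt0 : 0 < r31) (r32_gt0 : 0 < r32).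

Lemma empty_gap_delta3 (a b D : int) :
  r31 < c1 -> 1 <= D ->
  0 <= a * c1 - b * r31 -> 0 <= - a * r12 - b * r32 -> 0 <= c3 - a * r13 + b * c3 ->
  ~ (0 < a - b * D < D).
Proof.
move=> lt_r31_c1 D_ge1 z1 z2 z3.
have [b_ge0 | b_lt0] := lerP 0 b.
  have a0 : a = 0 by nia.
  have b0 : b = 0 by nia.
  by rewrite a0 b0; lia.
have lt_ba : b < a by nia.
nia.
Qed.

Lemma cone_ge0 (a b : int) : r13 * r31 < c1 * c3 -> 0 < c1 -> 0 < c3 ->
  0 <= a * c1 - b * r31 -> 0 <= - a * r13 + b * c3 -> 0 <= a /\ 0 <= b.
Proof.
move=> det c1_gt0 c3_gt0 z1 z3.
have : 0 <= a * (c1 * c3 - r13 * r31) by nia.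
have : 0 <= b * (c1 * c3 - r13 * r31) by nia.
nia.
Qed.

Lemma empty_gap_below_delta3 (a b D j : int) :
  r13 * r31 < c1 * c3 -> 0 < c1 -> 0 < c3 ->
  0 <= a * c1 - b * r31 -> 0 <= r32 + j * r12 - a * r12 - b * r32 -> 0 <= - a * r13 + b * c3 ->
  ~ (j - D < a - b * D < 0).
Proof.
move=> det c1_gt0 c3_gt0 z1 z2 z3.
have [a_ge0 b_ge0] := @cone_ge0 a b det c1_gt0 c3_gt0 z1 z3.
have [b0 | b_ge1] : b = 0 \/ 1 <= b by lia.
  have a0 : a = 0 by rewrite b0 in z1 z3; nia.
  by rewrite a0 b0; lia.
have : a <= j by nia.
nia.
Qed.

Lemma empty_gap_below_delta1 (a b D j : int) :
  r13 * r31 < c1 * c3 -> 0 < c1 -> 0 < c3 ->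
  0 <= a * c1 - b * r31 -> 0 <= r12 + j * r32 - a * r12 - b * r32 -> 0 <= - a * r13 + b * c3 ->
  ~ (0 < a * D - b < D - j).
Proof.
move=> det c1_gt0 c3_gt0 z1 z2 z3.
have [a_ge0 b_ge0] := @cone_ge0 a b det c1_gt0 c3_gt0 z1 z3.
have [a0 | a_ge1] : a = 0 \/ 1 <= a by lia.
  have b0 : b = 0 by rewrite a0 in z1 z3; nia.
  by rewrite a0 b0; lia.
have : b <= j by nia.
nia.
Qed.

Lemma empty_gap_delta1 (a b D : int) :
  r13 < c3 -> D = c1 - r12 - r13 -> 2 <= D -> r31 * D < c1 ->
  0 <= a * c1 - b * r31 -> 0 <= r12 - a * r12 - b * r32 -> 0 <= r13 - a * r13 + b * c3 ->
  ~ (0 < a * D - b < D).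
Proof.
move=> lt_r13_c3 eD D_ge2 lt_c1 z1 z2 z3.
have [a_ge1 | a_le0] := lerP 1 a.
  have b_le0 : b <= 0 by nia.
  nia.
have b_le0 : b <= 0 by nia.
have [a0 | a_lt0] : a = 0 \/ a <= -1 by lia.
  have b0 : b = 0 by rewrite a0 in z1 z3; nia.
  by rewrite a0 b0; lia.
have : - a * D < - b by nia.
have : - b < 1 - a by nia.
nia.
Qed.
End LatticeGaps.

Record factorization := Fac { x1 : nat; x2 : nat; x3 : nat }.

Section Factorizations.
Variables n1 n2 n3 c1 r12 r13 c3 r31 r32 : nat.
Hypotheses (n1_gt0 : (0 < n1)%N) (n1_lt_n2 : (n1 < n2)%N) (n2_lt_n3 : (n2 < n3)%N).
Hypotheses (c1_min : is_c n1 n2 n3 c1) (r12_gt0 : (0 < r12)%N) (r13_gt0 : (0 < r13)%N).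
Hypothesis rel1 : (c1 * n1 = r12 * n2 + r13 * n3)%N.
Hypotheses (c3_min : is_c n3 n1 n2 c3) (r31_gt0 : (0 < r31)%N) (r32_gt0 : (0 < r32)%N).
Hypothesis rel3 : (c3 * n3 = r31 * n1 + r32 * n2)%N.

Definition delta1 : int := (Posz c1 - Posz r12 - Posz r13)%R.
Definition delta3 : int := (Posz r31 + Posz r32 - Posz c3)%R.

Lemma c1_le c x y : (0 < c)%N -> (x * n2 + y * n3 = c * n1)%N -> (c1 <= c)%N.
Proof. by case: c1_min => _ [_ min] c_gt0 e; apply: min => //; exists x, y. Qed.

Lemma c3_le c x y : (0 < c)%N -> (x * n1 + y * n2 = c * n3)%N -> (c3 <= c)%N.
Proof. by case: c3_min => _ [_ min] c_gt0 e; apply: min => //; exists x, y. Qed.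

Lemma c1_gt0 : (0 < c1)%N. Proof. by case: c1_min. Qed.
Lemma c3_gt0 : (0 < c3)%N. Proof. by case: c3_min. Qed.

Lemma delta1_gt0 : (0 < delta1)%R.
Proof. rewrite /delta1; nia. Qed.

Lemma delta3_gt0 : (0 < delta3)%R.
Proof. rewrite /delta3; nia. Qed.

Lemma r31_lt_c1 : (r31 < c1)%N.
Proof.
rewrite ltnNge; apply/negP => le_c1_r31.
have [lt_r13_c3|] := ltnP r13 c3; last by nia.
have := @c3_le (c3 - r13) (r31 - c1) (r12 + r32); nia.
Qed.

Lemma r13_lt_c3 : (r13 < c3)%N.
Proof.
rewrite ltnNge; apply/negP => le_c3_r13.
have [lt_r31_c1|] := ltnP r31 c1; last by nia.
have := @c1_le (c1 - r31) (r12 + r32) (r13 - c3); nia.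
Qed.

Lemma c1c3_n3 : (c1 * c3 * n3 = r31 * r13 * n3 + (r31 * r12 + c1 * r32) * n2)%N.
Proof. by rewrite -mulnA rel3 mulnDr mulnCA rel1; ring. Qed.

Lemma c1c3_n1 : (c1 * c3 * n1 = r31 * r13 * n1 + (c3 * r12 + r13 * r32) * n2)%N.
Proof. by rewrite [c1 * c3]mulnC -mulnA rel1 mulnDr [c3 * (r13 * n3)]mulnCA rel3; ring. Qed.

Lemma r13r31_lt_c1c3 : (r13 * r31 < c1 * c3)%N.
Proof. have := c1c3_n3; nia. Qed.

Lemma r31_delta1_lt : (Posz r31 * delta1 < Posz c1 * delta3)%R.
Proof.
have := c1c3_n3; have := r13r31_lt_c1c3 => lt_c e.
have : (c1 * c3 - r31 * r13 < r31 * r12 + c1 * r32)%N.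
  rewrite ltnNge; apply/negP => le.
  have : ((r31 * r12 + c1 * r32) * n3 <= (c1 * c3 - r31 * r13) * n3)%N by exact: leq_mul.
  rewrite mulnBl; nia.
rewrite /delta1 /delta3; nia.
Qed.

Lemma r13_delta3_lt : (Posz r13 * delta3 < Posz c3 * delta1)%R.
Proof.
have := c1c3_n1; have := r13r31_lt_c1c3 => lt_c e.
have : (c3 * r12 + r13 * r32 < c1 * c3 - r31 * r13)%N.
  rewrite ltnNge; apply/negP => le.
  have : ((c1 * c3 - r31 * r13) * n2 <= (c3 * r12 + r13 * r32) * n2)%N by exact: leq_mul.
  rewrite mulnBl; nia.
rewrite /delta1 /delta3; nia.
Qed.

(* That is, c2 >= r12 + r32: the move by v1 + v3 applies to any factorization using n2 only. *)
Lemma r12_r32_le k a b : (0 < k)%N -> (k * n2 = a * n1 + b * n3)%N -> (r12 + r32 <= k)%N.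
Proof.
elim/ltn_ind: k a b => k IH a b k_gt0 e.
have [le_c1_a|lt_a_c1] := leqP c1 a.
  have [lt_r12_k|] := ltnP r12 k; last by nia.
  have := IH (k - r12) _ (a - c1) (r13 + b); nia.
have [le_c3_b|lt_b_c3] := leqP c3 b.
  have [lt_r32_k|] := ltnP r32 k; last by nia.
  have := IH (k - r32) _ (a + r31) (b - c3); nia.
have a_gt0 : (0 < a)%N.
  rewrite lt0n; apply/eqP => a0; subst a; have := @c3_le b 0 k; nia.
have b_gt0 : (0 < b)%N.
  rewrite lt0n; apply/eqP => b0; subst b; have := @c1_le a k 0; nia.
have lt_r32_k : (r32 < k)%N.
  rewrite ltnNge; apply/negP => le; have := @c3_le (c3 - b) (r31 + a) (r32 - k); nia.
have lt_r12_k : (r12 < k)%N.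
  rewrite ltnNge; apply/negP => le; have := @c1_le (c1 - a) (r12 - k) (r13 + b); nia.
have := @c1_le (r31 + a) (k - r32) (c3 - b); have := @c3_le (r13 + b) (c1 - a) (k - r12).
nia.
Qed.

Definition weight x := (x1 x * n1 + x2 x * n2 + x3 x * n3)%N.
Definition len x := (x1 x + x2 x + x3 x)%N.

Definition trade x y (a b : int) : Prop :=
  [/\ Posz (x1 y) = (Posz (x1 x) + a * Posz c1 - b * Posz r31)%R,
      Posz (x2 y) = (Posz (x2 x) - a * Posz r12 - b * Posz r32)%R &
      Posz (x3 y) = (Posz (x3 x) - a * Posz r13 + b * Posz c3)%R].

Lemma trade_weight x y a b : trade x y a b -> weight y = weight x.
Proof.
case=> e1 e2 e3; apply/eqP; rewrite -eqz_nat.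
have -> : Posz (weight y) = (Posz (weight x)
    + a * (Posz (c1 * n1) - Posz (r12 * n2 + r13 * n3))
    + b * (Posz (c3 * n3) - Posz (r31 * n1 + r32 * n2)))%R.
  by rewrite /weight !PoszD !PoszM e1 e2 e3; ring.
by rewrite rel1 rel3 !subrr !mulr0 !addr0.
Qed.

Lemma trade_len x y a b : trade x y a b ->
  Posz (len y) = (Posz (len x) + a * delta1 - b * delta3)%R.
Proof. by case=> e1 e2 e3; rewrite /len !PoszD e1 e2 e3 /delta1 /delta3; ring. Qed.

Lemma trade_refl x : trade x x 0 0.
Proof. by split; ring. Qed.

Lemma trade_sym x y a b : trade x y a b -> trade y x (- a) (- b).
Proof. by case=> e1 e2 e3; split; rewrite ?e1 ?e2 ?e3; ring. Qed.

Lemma trade_trans x y z a b a' b' :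
  trade x y a b -> trade y z a' b' -> trade x z (a + a') (b + b').
Proof. by case=> e1 e2 e3 [f1 f2 f3]; split; rewrite ?f1 ?f2 ?f3 ?e1 ?e2 ?e3; ring. Qed.

Definition add x e := Fac (x1 x + x1 e) (x2 x + x2 e) (x3 x + x3 e).

Lemma trade_add x y e a b : trade x y a b -> trade (add x e) (add y e) a b.
Proof. by case=> e1 e2 e3; split; rewrite /= !PoszD ?e1 ?e2 ?e3; ring. Qed.

Definition unit_trade (a b : int) : Prop :=
  [\/ a = 0%R /\ (b = 1 \/ b = -1)%R, b = 0%R /\ (a = 1 \/ a = -1)%R
    | a = b /\ (a = 1 \/ a = -1)%R].

Definition step x y := exists a b, unit_trade a b /\ trade x y a b.

Local Notation linked := (clos_refl_trans factorization step).

Lemma step_sym x y : step x y -> step y x.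
Proof.
case=> a [b [ab xy]]; exists (- a)%R, (- b)%R; split; last exact: trade_sym.
by case: ab => -[ea eb]; [apply: Or31 | apply: Or32 | apply: Or33]; lia.
Qed.

Lemma linked_sym x y : linked x y -> linked y x.
Proof.
elim=> [u v /step_sym uv | u | u v w _ uv _ vw].
- exact: rt_step.
- exact: rt_refl.
- exact: rt_trans vw uv.
Qed.

Lemma linked_trade x y : linked x y -> exists a b, trade x y a b.
Proof.
elim=> [u v [a [b [_ uv]]] | u | u v w _ [a [b uv]] _ [a' [b' vw]]].
- by exists a, b.
- by exists 0%R, 0%R; exact: trade_refl.
- by exists (a + a')%R, (b + b')%R; exact: trade_trans uv vw.
Qed.

Lemma step_weight x y : step x y -> weight y = weight x.
Proof. by case=> a [b [_ /trade_weight]]. Qed.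

Lemma linked_weight x y : linked x y -> weight y = weight x.
Proof. by case/linked_trade=> a [b /trade_weight]. Qed.

Lemma linked_add x y e : linked x y -> linked (add x e) (add y e).
Proof.
elim=> [u v [a [b [ab uv]]] | u | u v w _ uv _ vw]; last exact: rt_trans uv vw.
  by apply: rt_step; exists a, b; split; last exact: trade_add.
exact: rt_refl.
Qed.

Lemma step_len x y : step x y ->
  (Posz (len y) <= Posz (len x) + Num.max delta1 delta3)%R.
Proof.
case=> a [b [ab /trade_len ->]]; have := delta1_gt0; have := delta3_gt0.
rewrite -addrA lerD2l; case: ab => -[-> [->|->]]; lia.
Qed.

Lemma linked_cross x y t : linked x y -> (len x <= t < len y)%N ->
  exists z w, [/\ weight z = weight x, step z w & (len z <= t < len w)%N].
Proof.
move=> xy; elim: xy t => [u v uv | u | u v w uv IHuv vw IHvw] t.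
- by exists u, v.
- lia.
- move=> ut; have [lt_t_v | le_v_t] := ltnP t (len v).
    by apply: IHuv; lia.
  have [z [z' [zv zz' tz]]] := IHvw t ltac:(lia).
  by exists z, z'; rewrite zv (linked_weight uv).
Qed.

Definition share x y : bool :=
  [|| (0 < x1 x) && (0 < x1 y), (0 < x2 x) && (0 < x2 y) | (0 < x3 x) && (0 < x3 y)]%N.

Lemma weight_add x e : weight (add x e) = (weight x + weight e)%N.
Proof. by rewrite /weight /=; ring. Qed.

Lemma linked_of_share x y :
  (forall u v, (weight u < weight x)%N -> weight u = weight v -> linked u v) ->
  weight x = weight y -> share x y -> linked x y.
Proof.
move=> IH w xy.
have [e [u [v [e_gt0 xu yv]]]] :
    exists e u v, [/\ (0 < weight e)%N, x = add u e & y = add v e].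
  case: x y {w IH} xy => [a1 a2 a3] [b1 b2 b3] /or3P[] /andP[/= a_gt0 b_gt0].
  - exists (Fac 1 0 0), (Fac a1.-1 a2 a3), (Fac b1.-1 b2 b3).
    by split; rewrite /weight /add /=; try congr Fac; lia.
  - exists (Fac 0 1 0), (Fac a1 a2.-1 a3), (Fac b1 b2.-1 b3).
    by split; rewrite /weight /add /=; try congr Fac; lia.
  - exists (Fac 0 0 1), (Fac a1 a2 a3.-1), (Fac b1 b2 b3.-1).
    by split; rewrite /weight /add /=; try congr Fac; lia.
rewrite xu yv; apply: linked_add; apply: IH; move: w; rewrite xu yv !weight_add; lia.
Qed.

Lemma step_from_n1 a y : (0 < a)%N -> x1 y = 0%N -> (0 < x2 y + x3 y)%N ->
  weight (Fac a 0 0) = weight y -> exists x', step (Fac a 0 0) x' /\ share x' y.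
Proof.
case: y => b1 b2 b3 /= a_gt0 -> b_gt0; rewrite /weight /= => w.
have le_c1_a : (c1 <= a)%N by apply: (@c1_le a b2 b3) => //; lia.
exists (Fac (a - c1) r12 r13); split; last by rewrite /share /=; lia.
by exists (-1)%R, 0%R; split; [apply: Or32 | split => /=]; lia.
Qed.

Lemma step_from_n2 a y : (0 < a)%N -> x2 y = 0%N -> (0 < x1 y + x3 y)%N ->
  weight (Fac 0 a 0) = weight y -> exists x', step (Fac 0 a 0) x' /\ share x' y.
Proof.
case: y => b1 b2 b3 /= a_gt0 -> b_gt0; rewrite /weight /= => w.
have le_a : (r12 + r32 <= a)%N by apply: (@r12_r32_le a b1 b3) => //; lia.
have := r31_lt_c1; have := r13_lt_c3 => ? ?.
exists (Fac (c1 - r31) (a - r12 - r32) (c3 - r13)); split; last by rewrite /share /=; lia.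
by exists 1%R, 1%R; split; [apply: Or33 | split => /=]; lia.
Qed.

Lemma step_from_n3 a y : (0 < a)%N -> x3 y = 0%N -> (0 < x1 y + x2 y)%N ->
  weight (Fac 0 0 a) = weight y -> exists x', step (Fac 0 0 a) x' /\ share x' y.
Proof.
case: y => b1 b2 b3 /= a_gt0 -> b_gt0; rewrite /weight /= => w.
have le_c3_a : (c3 <= a)%N by apply: (@c3_le a b1 b2) => //; lia.
exists (Fac r31 r32 (a - c3)); split; last by rewrite /share /=; lia.
by exists 0%R, (-1)%R; split; [apply: Or31 | split => /=]; lia.
Qed.

Lemma share_sym x y : share x y = share y x.
Proof. by rewrite /share; lia. Qed.

Definition pure x : bool :=
  [|| (x2 x == 0) && (x3 x == 0), (x1 x == 0) && (x3 x == 0) | (x1 x == 0) && (x2 x == 0)]%N.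

Lemma pure_step x y : pure x -> (0 < len x)%N -> (0 < len y)%N ->
  weight x = weight y -> ~~ share x y -> exists x', step x x' /\ share x' y.
Proof.
case: x => a1 a2 a3; rewrite /pure /len /share /= => /or3P[] /andP[/eqP-> /eqP->] lx ly w ns.
- by apply: step_from_n1; lia.
- by apply: step_from_n2; lia.
- by apply: step_from_n3; lia.
Qed.

Lemma weight_eq0 x : weight x = 0%N -> x = Fac 0 0 0.
Proof.
case: x => a1 a2 a3; rewrite /weight /= => w.
by have [-> [-> ->]] : (a1 = 0 /\ a2 = 0 /\ a3 = 0)%N by nia.
Qed.

Lemma linked_of_weight x y : weight x = weight y -> linked x y.
Proof.
have [s lt_xs] := ubnP (weight x); elim: s x y lt_xs => // s IH x y lt_xs w.
have share_linked u v : weight u = weight x -> weight u = weight v -> share u v -> linked u v.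
  by move=> ux; apply: linked_of_share => u' v' lt; apply: IH; lia.
have [x0 | x_gt0] := posnP (weight x).
  by rewrite (weight_eq0 x0) (weight_eq0 (etrans (esym w) x0)); exact: rt_refl.
have [xy | nxy] := boolP (share x y); first exact: share_linked.
have [lx ly] : (0 < len x)%N /\ (0 < len y)%N.
  by move: w x_gt0; rewrite /weight /len; nia.
have [xp | yp] : pure x \/ pure y by move: nxy; rewrite /pure /share; lia.
- have [x' [xx' x'y]] := pure_step xp lx ly w nxy.
  apply: rt_trans (rt_step _ _ _ _ xx') (share_linked _ _ (step_weight xx') _ x'y).
  by rewrite (step_weight xx').
- have [y' [yy' y'x]] := pure_step yp ly lx (esym w) ltac:(by rewrite share_sym).
  apply: rt_trans (linked_sym (rt_step _ _ _ _ yy')).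
  by apply: share_linked; rewrite 1?share_sym // (step_weight yy').
Qed.

Lemma trade_of_weight x y : weight x = weight y -> exists a b, trade x y a b.
Proof. by move/linked_of_weight/linked_trade. Qed.

Lemma is_lengthP s m : is_length n1 n2 n3 s m <-> exists x, weight x = s /\ len x = m.
Proof.
split=> [[a1 [a2 [a3 [w l]]]] | [[a1 a2 a3] [w l]]]; first by exists (Fac a1 a2 a3).
by exists a1, a2, a3.
Qed.

Lemma Delta_le_max d : in_Delta_S n1 n2 n3 d -> (Posz d <= Num.max delta1 delta3)%R.
Proof.
case=> s [_ [m [m' [/is_lengthP[x [xs xm]] [/is_lengthP[y [ys ym]] [lt_mm' [gap ->]]]]]]].
have xy := linked_of_weight (etrans xs (esym ys)).
have [z [w [zx zw mz]]] := linked_cross (t := m) xy ltac:(lia).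
have /gap : is_length n1 n2 n3 s (len w).
  by apply/is_lengthP; exists w; rewrite (step_weight zw) zx.
have := step_len zw; lia.
Qed.

Lemma Delta_of_gap x y : weight y = weight x -> (len x < len y)%N ->
  (forall z, weight z = weight x -> ~ (len x < len z < len y)%N) ->
  in_Delta_S n1 n2 n3 (len y - len x).
Proof.
move=> yx lt_xy gap; exists (weight x); split; first by exists (x1 x), (x2 x), (x3 x).
exists (len x), (len y); split; first by apply/is_lengthP; exists x.
split; first by apply/is_lengthP; exists y.
do 2![split=> //] => m /is_lengthP[z [zx <-]] [xz zy].
by apply: (gap z zx); rewrite xz zy.
Qed.

Lemma Delta_delta3 d : delta1 = 1%R -> Posz d = delta3 -> in_Delta_S n1 n2 n3 d.
Proof.
move=> d1 d3; set x := Fac 0 0 c3; set y := Fac r31 r32 0.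
have xy : trade x y 0 (-1) by split=> /=; lia.
have := trade_len xy; rewrite d1 => lxy.
have := delta3_gt0; have := r31_lt_c1; have := c3_gt0 => ? ? ?.
have -> : d = (len y - len x)%N by lia.
apply: Delta_of_gap; [exact: trade_weight xy | lia | move=> z /esym].
case/trade_of_weight=> a [b xz]; have := trade_len xz; rewrite d1.
suff: ~ (0 < a - b * delta3 < delta3)%R by lia.
case: xz => /= e1 e2 e3.
by apply: (@empty_gap_delta3 c1 r12 r13 c3 r31 r32); lia.
Qed.

Lemma Delta_below_delta3 d j : delta1 = 1%R -> (0 < d)%N -> (0 < j)%N ->
  Posz (d + j) = delta3 -> in_Delta_S n1 n2 n3 d.
Proof.
move=> d1 d_gt0 j_gt0 dj3.
have := r13_delta3_lt; rewrite d1 mulr1 => r13_lt.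
have le_r31 : (r31 <= j * c1)%N by have := r31_lt_c1; nia.
have le_c3 : (j * r13 <= c3)%N by nia.
set x := Fac (j * c1 - r31) 0 (c3 - j * r13); set y := Fac 0 (r32 + j * r12) 0.
have xy : trade x y (- Posz j) (-1) by split=> /=; nia.
have := trade_len xy; rewrite d1 => lxy.
have := c1_gt0; have := c3_gt0; have := r13r31_lt_c1c3 => ? ? ?.
have -> : d = (len y - len x)%N by lia.
apply: Delta_of_gap; [exact: trade_weight xy | lia | move=> z].
rewrite -(trade_weight xy) => /esym /trade_of_weight[a [b yz]].
have := trade_len yz; rewrite d1.
suff: ~ (Posz j - delta3 < a - b * delta3 < 0)%R by lia.
case: yz => /= e1 e2 e3.
by apply: (@empty_gap_below_delta3 c1 r12 r13 c3 r31 r32); lia.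
Qed.

Lemma Delta_delta1 d : delta3 = 1%R -> (2 <= d)%N -> Posz d = delta1 -> in_Delta_S n1 n2 n3 d.
Proof.
move=> d3 d_ge2 d1.
have := r31_delta1_lt; rewrite d3 mulr1 => r31_lt.
set x := Fac 0 r12 r13; set y := Fac c1 0 0.
have xy : trade x y 1 0 by split=> /=; lia.
have := trade_len xy; rewrite d3 => lxy.
have := r13_lt_c3 => ?.
have -> : d = (len y - len x)%N by lia.
apply: Delta_of_gap; [exact: trade_weight xy | lia | move=> z /esym].
case/trade_of_weight=> a [b xz]; have := trade_len xz; rewrite d3.
suff: ~ (0 < a * delta1 - b < delta1)%R by lia.
case: xz => /= e1 e2 e3.
by apply: (@empty_gap_delta1 c1 r12 r13 c3 r31 r32); rewrite /delta1 in d1 r31_lt *; lia.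
Qed.

Lemma Delta_below_delta1 d j : delta3 = 1%R -> (0 < d)%N -> (0 < j)%N ->
  Posz (d + j) = delta1 -> in_Delta_S n1 n2 n3 d.
Proof.
move=> d3 d_gt0 j_gt0 dj1.
have := r31_delta1_lt; rewrite d3 mulr1 => r31_lt.
have le_c1 : (j * r31 <= c1)%N by nia.
have le_r13 : (r13 <= j * c3)%N by have := r13_lt_c3; nia.
set x := Fac 0 (r12 + j * r32) 0; set y := Fac (c1 - j * r31) 0 (j * c3 - r13).
have xy : trade x y 1 (Posz j) by split=> /=; nia.
have := trade_len xy; rewrite d3 => lxy.
have := c1_gt0; have := c3_gt0; have := r13r31_lt_c1c3 => ? ? ?.
have -> : d = (len y - len x)%N by lia.
apply: Delta_of_gap; [exact: trade_weight xy | lia | move=> z /esym].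
case/trade_of_weight=> a [b xz]; have := trade_len xz; rewrite d3.
suff: ~ (0 < a * delta1 - b < delta1 - Posz j)%R by lia.
case: xz => /= e1 e2 e3.
by apply: (@empty_gap_below_delta1 c1 r12 r13 c3 r31 r32); lia.
Qed.

Lemma Delta_of_le_max d : Num.min delta1 delta3 = 1%R -> (0 < d)%N ->
  (Posz d <= Num.max delta1 delta3)%R -> in_Delta_S n1 n2 n3 d.
Proof.
move=> min1 d_gt0; have := delta1_gt0; have := delta3_gt0.
have [d1 | d3] : delta1 = 1%R \/ delta3 = 1%R by lia.
- case E: delta3 => [D|//] _ _ le_dD.
  have [->|lt_dD] : d = D \/ (d < D)%N by lia.
    by apply: Delta_delta3.
  by apply: (@Delta_below_delta3 d (D - d)) => //; lia.
- case E: delta1 => [D|//] _ _ le_dD.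
  have [->|lt_dD] : d = D \/ (d < D)%N by lia.
    have [D1|D_ge2] : D = 1%N \/ (2 <= D)%N by lia.
      by apply: Delta_delta3; lia.
    exact: Delta_delta1.
  by apply: (@Delta_below_delta1 d (D - d)) => //; lia.
Qed.

End Factorizations.

Theorem corollary2p21 (n1 n2 n3 : nat) (c1 r12 r13 c3 r31 r32 : nat) :
  (0 < n1)%N -> (n1 < n2)%N -> (n2 < n3)%N ->
  gcdn (gcdn n1 n2) n3 = 1%N ->
  minimally_generated n1 n2 n3 ->
  ~ symmetric_sg n1 n2 n3 ->
  (* |Delta(S)| > 1 *)
  (exists d d' : nat, d <> d' /\ in_Delta_S n1 n2 n3 d /\ in_Delta_S n1 n2 n3 d') ->
  (* min Delta(S) = 1 *)
  in_Delta_S n1 n2 n3 1 ->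
  (forall d : nat, in_Delta_S n1 n2 n3 d -> (1 <= d)%N) ->
  (* c_1, r_12, r_13 *)
  is_c n1 n2 n3 c1 -> (0 < r12)%N -> (0 < r13)%N ->
  (c1 * n1 = r12 * n2 + r13 * n3)%N ->
  (* c_3, r_31, r_32 *)
  is_c n3 n1 n2 c3 -> (0 < r31)%N -> (0 < r32)%N ->
  (c3 * n3 = r31 * n1 + r32 * n2)%N ->
  let delta1 : int := ((Posz c1) - (Posz r12) - (Posz r13))%R in
  let delta3 : int := ((Posz r31) + (Posz r32) - (Posz c3))%R in
  Num.min delta1 delta3 = 1%R ->
  forall d : nat,
    in_Delta_S n1 n2 n3 d <-> ((1 <= d)%N /\ ((Posz d) <= Num.max delta1 delta3)%R).
Proof.
move=> n1_gt0 n1_lt_n2 n2_lt_n3 _ _ _ _ _ Delta_ge1 c1_min r12_gt0 r13_gt0 rel1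
  c3_min r31_gt0 r32_gt0 rel3 delta1 delta3 min1 d.
(* Nonsymmetry is only needed for r12, r13, r31, r32 > 0, which are assumed directly. *)
split=> [Dd | [d_gt0 le_d]].
- split; first exact: Delta_ge1.
  exact: (Delta_le_max n1_gt0 n1_lt_n2 n2_lt_n3 c1_min r12_gt0 r13_gt0 rel1
            c3_min r31_gt0 r32_gt0 rel3 Dd).
- exact: (Delta_of_le_max n1_gt0 n1_lt_n2 n2_lt_n3 c1_min r12_gt0 r13_gt0 rel1
            c3_min r31_gt0 r32_gt0 rel3 min1 d_gt0 le_d).
Qed.
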